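(* Let $f:\Omega_D\to\mathbb{O}$ be a slice function induced by the stem function $(F_1,F_2):D\to\mathbb{O}^2$, let $p=\alpha+I\beta\in\Omega_D$ with $\alpha,\beta\in\mathbb{R}$, $I\in\mathbb S$, and let $w=(\alpha,\beta)\in D$. Put $\gamma=F_1(w)$, $\delta=F_2(w)$, $q=f(p)=\gamma+I\delta$, and define the slice functions $g_1=(f\cdot\overline\gamma)\cdot\big((-\gamma(\overline qI))I\big)$ and $g_2=(f\cdot\overline\delta)\cdot(\delta\overline q)$. Then $g_1(p)=|\gamma|^2|q|^2$ and $g_2(p)=|\delta|^2|q|^2$.
   Context: Octonions $\mathbb{O}=\mathbb{H}+\ell\mathbb{H}$ (product $(a+\ell b)(c+\ell d)=(ac-d\bar b)+\ell(\bar a d+cb)$, conjugation $\overline{a+\ell b}=\bar a-\ell b$), identified with $\mathbb{R}^8$ with norm $|\cdot|$; $\mathbb S=\{I:I^2=-1\}$. $D\subset\mathbb{R}^2$ non-empty open, invariant under $(\alpha,\beta)\mapsto(\alpha,-\beta)$, $\Omega_D=\{\alpha+\beta I:(\alpha,\beta)\in D,I\in\mathbb S\}$, assumed connected. A slice function is $f(\alpha+\beta I)=F_1(\alpha,\beta)+IF_2(\alpha,\beta)$ for a stem function $(F_1,F_2):D\to\mathbb{O}^2$ ($F_1$ even, $F_2$ odd in $\beta$). The slice product of a slice function $f$ induced by $(F_1,F_2)$ with a constant $c\in\mathbb{O}$ (on the right) is the slice function $f\cdot c$ induced by the stem function $(F_1c,F_2c)$. *)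

From HB Require Import structures.
From mathcomp Require Import all_boot all_order all_algebra.
From mathcomp Require Import all_classical all_reals all_analysis.
Set Implicit Arguments. Unset Strict Implicit. Unset Printing Implicit Defensive.
Import Order.TTheory GRing.Theory Num.Theory.
Import numFieldNormedType.Exports.
Local Open Scope ring_scope.
Local Open Scope classical_set_scope.

Section Oct.
Variable R : realType.

Record quat := Quat { qre : R; qi : R; qj : R; qk : R }.

Definition qadd (a b : quat) : quat :=
  Quat (qre a + qre b) (qi a + qi b) (qj a + qj b) (qk a + qk b).
Definition qopp (a : quat) : quat := Quat (- qre a) (- qi a) (- qj a) (- qk a).
Definition qconj (a : quat) : quat := Quat (qre a) (- qi a) (- qj a) (- qk a).
Definition qmul (a b : quat) : quat :=
  Quat (qre a * qre b - qi a * qi b - qj a * qj b - qk a * qk b)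
       (qre a * qi b + qi a * qre b + qj a * qk b - qk a * qj b)
       (qre a * qj b - qi a * qk b + qj a * qre b + qk a * qi b)
       (qre a * qk b + qi a * qj b - qj a * qi b + qk a * qre b).

(** Octonions O = H + l H, the pair (a, b) standing for a + l b. *)
Record oct := Oct { ofst : quat; osnd : quat }.

Definition oadd (x y : oct) : oct := Oct (qadd (ofst x) (ofst y)) (qadd (osnd x) (osnd y)).
Definition oopp (x : oct) : oct := Oct (qopp (ofst x)) (qopp (osnd x)).
Definition omul (x y : oct) : oct :=
  let a := ofst x in let b := osnd x in let c := ofst y in let d := osnd y in
  Oct (qadd (qmul a c) (qopp (qmul d (qconj b))))
      (qadd (qmul (qconj a) d) (qmul c b)).
Definition oconj (x : oct) : oct := Oct (qconj (ofst x)) (qopp (osnd x)).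

Definition oreal (r : R) : oct := Oct (Quat r 0 0 0) (Quat 0 0 0 0).

Definition oct_coords (x : oct) : seq R :=
  [:: qre (ofst x); qi (ofst x); qj (ofst x); qk (ofst x);
      qre (osnd x); qi (osnd x); qj (osnd x); qk (osnd x)].
Definition oct_to_rV (x : oct) : 'rV[R]_8 := \row_(i < 8) nth 0 (oct_coords x) i.

Definition onorm (x : oct) : R := Num.sqrt (\sum_(c <- oct_coords x) c ^+ 2).

Definition imag_units : set oct := [set I | omul I I = oreal (-1)].

Definition opoint (a b : R) (I : oct) : oct := oadd (oreal a) (omul (oreal b) I).

Definition OmegaD (D : set (R * R)) : set oct :=
  [set x | exists a b I, D (a, b) /\ imag_units I /\ x = opoint a b I].

Definition admissible_domain (D : set (R * R)) : Prop :=
  [/\ open D, D !=set0,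
      (forall a b, D (a, b) -> D (a, - b)) &
      connected (oct_to_rV @` OmegaD D)].

Definition stem_function (D : set (R * R)) (F1 F2 : R * R -> oct) : Prop :=
  forall a b, D (a, b) -> F1 (a, - b) = F1 (a, b) /\ F2 (a, - b) = oopp (F2 (a, b)).

Definition induced_by (D : set (R * R)) (F1 F2 : R * R -> oct) (f : oct -> oct) : Prop :=
  forall a b I, D (a, b) -> imag_units I ->
    f (opoint a b I) = oadd (F1 (a, b)) (omul I (F2 (a, b))).

End Oct.

(* At p this is octonion arithmetic with q = gamma + I delta; put
   z = delta conj(gamma). Since I^2 = -1 forces conj(I) = -I, alternativity
   gives conj(q) I = conj(gamma) I + conj(delta), hence
   c1 = |gamma|^2 - conj(z) I and c2 = z - |delta|^2 I.  Expanding
   g1(p) = |gamma|^2 c1 + I (z c1) and g2(p) = conj(z) c2 + I (|delta|^2 c2)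
   with x (conj(x) y) = |x|^2 y leaves real terms plus a real multiple of
   I z - conj(z) I = I z + conj(I z) = 2 Re(I z), and the totals are
   |gamma|^2 |q|^2 and |delta|^2 |q|^2 because
   |q|^2 = |gamma|^2 + |delta|^2 + 2 Re(I z). *)

From HB Require Import structures.
From mathcomp Require Import all_boot all_order all_algebra.
From mathcomp Require Import all_classical all_reals all_analysis.
From mathcomp Require Import ring lra.
Import Order.TTheory GRing.Theory Num.Theory.
Import numFieldNormedType.Exports.
Local Open Scope ring_scope.
Local Open Scope classical_set_scope.

Section OctonionAlgebra.
Variable R : realType.
Local Notation oct := (oct R).

Definition oscale (r : R) (x : oct) : oct :=
  Oct (Quat (r * qre (ofst x)) (r * qi (ofst x)) (r * qj (ofst x)) (r * qk (ofst x)))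
      (Quat (r * qre (osnd x)) (r * qi (osnd x)) (r * qj (osnd x)) (r * qk (osnd x))).

Definition ore (x : oct) : R := qre (ofst x).

Definition osqnorm (x : oct) : R :=
  qre (ofst x) ^+ 2 + qi (ofst x) ^+ 2 + qj (ofst x) ^+ 2 + qk (ofst x) ^+ 2 +
  qre (osnd x) ^+ 2 + qi (osnd x) ^+ 2 + qj (osnd x) ^+ 2 + qk (osnd x) ^+ 2.

Ltac oct_coords :=
  repeat match goal with x : oct |- _ => destruct x as [[? ? ? ?] [? ? ? ?]] end;
  cbv [omul oadd oopp oconj oreal oscale ore osqnorm
       qmul qadd qopp qconj ofst osnd qre qi qj qk];
  lazymatch goal with
  | |- Oct _ _ = _ => f_equal; f_equal; ring
  | |- _ => ring
  end.

Lemma oaddA : associative (@oadd R). Proof. by move=> *; oct_coords. Qed.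
Lemma oaddC : commutative (@oadd R). Proof. by move=> *; oct_coords. Qed.
Lemma oadd0r : left_id (oreal 0) (@oadd R). Proof. by move=> *; oct_coords. Qed.
Lemma oaddNr : left_inverse (oreal 0) (@oopp R) (@oadd R).
Proof. by move=> *; oct_coords. Qed.

HB.instance Definition _ := gen_eqMixin oct.
HB.instance Definition _ := gen_choiceMixin oct.
HB.instance Definition _ := GRing.isZmodule.Build oct oaddA oaddC oadd0r oaddNr.

Lemma oaddE (x y : oct) : oadd x y = x + y. Proof. by []. Qed.
Lemma ooppE (x : oct) : oopp x = - x. Proof. by []. Qed.

Lemma oscaleA a b (x : oct) : oscale a (oscale b x) = oscale (a * b) x.
Proof. by oct_coords. Qed.
Lemma oscale1 : left_id 1 oscale. Proof. by move=> *; oct_coords. Qed.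
Lemma oscaleDr : right_distributive oscale +%R.
Proof. by move=> *; rewrite -!oaddE; oct_coords. Qed.
Lemma oscaleDl (x : oct) : {morph oscale^~ x : a b / a + b}.
Proof. by move=> *; rewrite -!oaddE; oct_coords. Qed.

HB.instance Definition _ :=
  GRing.Zmodule_isLmodule.Build R oct oscaleA oscale1 oscaleDr oscaleDl.

Lemma oscaleE r (x : oct) : oscale r x = r *: x. Proof. by []. Qed.

Ltac oct_ring := rewrite -?oaddE -?ooppE -?oscaleE; oct_coords.

Lemma orealE r : oreal r = r *: oreal 1 :> oct. Proof. by oct_ring. Qed.

Lemma oreal_inj : injective (@oreal R). Proof. by move=> r s [->]. Qed.

Lemma omulDl (x y z : oct) : omul (x + y) z = omul x z + omul y z.
Proof. by oct_ring. Qed.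
Lemma omulDr (x y z : oct) : omul x (y + z) = omul x y + omul x z.
Proof. by oct_ring. Qed.
Lemma omulNl (x y : oct) : omul (- x) y = - omul x y. Proof. by oct_ring. Qed.
Lemma omulNr (x y : oct) : omul x (- y) = - omul x y. Proof. by oct_ring. Qed.
Lemma omulZl r (x y : oct) : omul (r *: x) y = r *: omul x y. Proof. by oct_ring. Qed.
Lemma omulZr r (x y : oct) : omul x (r *: y) = r *: omul x y. Proof. by oct_ring. Qed.

Lemma omul_reall r (x : oct) : omul (oreal r) x = r *: x. Proof. by oct_ring. Qed.
Lemma omul_realr r (x : oct) : omul x (oreal r) = r *: x. Proof. by oct_ring. Qed.

Lemma oconjD (x y : oct) : oconj (x + y) = oconj x + oconj y. Proof. by oct_ring. Qed.
Lemma oconjK : involutive (@oconj R). Proof. by move=> *; oct_coords. Qed.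
Lemma oconjM (x y : oct) : oconj (omul x y) = omul (oconj y) (oconj x).
Proof. by oct_ring. Qed.

Lemma omul_conjr (x : oct) : omul x (oconj x) = oreal (osqnorm x). Proof. by oct_ring. Qed.
Lemma omul_conjl (x : oct) : omul (oconj x) x = oreal (osqnorm x). Proof. by oct_ring. Qed.
Lemma omulKconj (x y : oct) : omul x (omul (oconj x) y) = osqnorm x *: y.
Proof. by oct_ring. Qed.
Lemma omul_alternr (x y : oct) : omul (omul x y) y = omul x (omul y y).
Proof. by oct_ring. Qed.

Lemma addr_oconj (x : oct) : x + oconj x = oreal (2 * ore x). Proof. by oct_ring. Qed.
Lemma ore_omulA (x y z : oct) : ore (omul (omul x y) z) = ore (omul x (omul y z)).
Proof. by oct_ring. Qed.

Lemma osqnormD (x y : oct) :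
  osqnorm (x + y) = osqnorm x + osqnorm y + 2 * ore (omul y (oconj x)).
Proof. by oct_ring. Qed.
Lemma osqnormM (x y : oct) : osqnorm (omul x y) = osqnorm x * osqnorm y.
Proof. by oct_ring. Qed.
Lemma osqnorm_conj (x : oct) : osqnorm (oconj x) = osqnorm x. Proof. by oct_ring. Qed.

Lemma onorm_sqr (x : oct) : onorm x ^+ 2 = osqnorm x.
Proof.
rewrite /onorm sqr_sqrtr; last first.
  by rewrite big_seq; apply: sumr_ge0 => c _; rewrite sqr_ge0.
by rewrite /oct_coords !big_cons big_nil /osqnorm addr0 !addrA.
Qed.

Section ImaginaryUnit.
Variable I : oct.
Hypothesis unitI : imag_units I.

Lemma oconj_imag_unit : oconj I = - I.
Proof.
move: unitI; case: I => [[i0 i1 i2 i3] [i4 i5 i6 i7]]; rewrite /imag_units -ooppE.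
cbv [omul oopp oconj oreal qmul qadd qopp qconj ofst osnd qre qi qj qk].
move=> -[e0 e1 e2 e3 e4 e5 e6 e7].
suff -> : i0 = 0 by rewrite oppr0.
have := congr1 ( *%R i0) e0; have := congr1 ( *%R i1) e1;
have := congr1 ( *%R i2) e2; have := congr1 ( *%R i3) e3;
have := congr1 ( *%R i4) e4; have := congr1 ( *%R i5) e5;
have := congr1 ( *%R i6) e6; have := congr1 ( *%R i7) e7 => /=.
(* Weighting the coordinate equations by the coordinates of I cancels every
   i0 ik^2 term and leaves i0 (i0^2 + 1) = 0. *)
move=> *; have : i0 * (i0 ^+ 2 + 1) = 0 by lra.
by move/eqP; rewrite mulf_eq0 paddr_eq0 ?sqr_ge0 // oner_eq0 andbF orbF => /eqP.
Qed.

Lemma omul_imag_unitKr (x : oct) : omul (omul x I) I = - x.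
Proof. by rewrite omul_alternr unitI omul_realr scaleN1r. Qed.

Lemma osqnorm_imag_unit : osqnorm I = 1.
Proof.
apply: oreal_inj.
by rewrite -omul_conjr oconj_imag_unit omulNr unitI orealE scaleN1r opprK.
Qed.

Lemma omulI_sub_conj (z : oct) :
  omul I z - omul (oconj z) I = oreal (2 * ore (omul I z)).
Proof. by rewrite -addr_oconj oconjM oconj_imag_unit omulNr. Qed.

Variables gamma delta : oct.
Local Notation q := (gamma + omul I delta).
Local Notation z := (omul delta (oconj gamma)).

Lemma oconj_slice : oconj q = oconj gamma - omul (oconj delta) I.
Proof. by rewrite oconjD oconjM oconj_imag_unit omulNr. Qed.

Lemma osqnorm_slice :
  osqnorm q = osqnorm gamma + osqnorm delta + 2 * ore (omul I z).
Proof. by rewrite osqnormD osqnormM osqnorm_imag_unit mul1r ore_omulA. Qed.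

Lemma slice_coef1E :
  - omul (omul gamma (omul (oconj q) I)) I = osqnorm gamma *: oreal 1 - omul (oconj z) I.
Proof.
rewrite oconj_slice omulDl omulNl omul_imag_unitKr opprK omulDr omulKconj.
by rewrite oconjM oconjK omulDl omulZl unitI opprD (orealE (-1)) scaleN1r scalerN opprK.
Qed.

Lemma slice_coef2E : omul delta (oconj q) = z - osqnorm delta *: I.
Proof. by rewrite oconj_slice omulDr omulNr omulKconj. Qed.

Lemma slice_product1E (c := - omul (omul gamma (omul (oconj q) I)) I) :
  omul (omul gamma (oconj gamma)) c + omul I (omul z c) =
  oreal (osqnorm gamma * osqnorm q).
Proof.
rewrite /c slice_coef1E omul_conjr omul_reall omulDr omulNr omulZr omul_realr omulKconj.
rewrite omulDr omulNr !omulZr scale1r unitI addrA -scalerDr addrAC -addrA omulI_sub_conj.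
rewrite (orealE (2 * _)) (orealE (-1)) (orealE (_ * _)) -scalerDl !scalerA -scalerBl.
by congr (_ *: _); rewrite osqnorm_slice osqnormM osqnorm_conj; ring.
Qed.

Lemma slice_product2E (c := omul delta (oconj q)) :
  omul (omul gamma (oconj delta)) c + omul I (omul (omul delta (oconj delta)) c) =
  oreal (osqnorm delta * osqnorm q).
Proof.
have -> : omul gamma (oconj delta) = oconj z by rewrite oconjM oconjK.
rewrite /c slice_coef2E omul_conjr omul_reall omulDr omulNr omulZr omul_conjl.
rewrite omulZr omulDr omulNr omulZr unitI scalerBr (addrC (oreal _)) addrACA.
rewrite (addrC (- (_ *: _))) -scalerBr omulI_sub_conj.
rewrite (orealE (2 * _)) (orealE (osqnorm _)) (orealE (-1)) (orealE (_ * _)) !scalerA.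
rewrite -scalerBl -scalerDl.
by congr (_ *: _); rewrite osqnorm_slice osqnormM osqnorm_conj; ring.
Qed.

End ImaginaryUnit.
End OctonionAlgebra.

Theorem lemma3p10 (R : realType) (D : set (R * R)) (F1 F2 : R * R -> oct R)
  (f g1 g2 : oct R -> oct R) (alpha beta : R) (I : oct R) :
  admissible_domain D ->
  stem_function D F1 F2 ->
  induced_by D F1 F2 f ->
  D (alpha, beta) -> imag_units I ->
  let w := (alpha, beta) in
  let p := opoint alpha beta I in
  let gamma := F1 w in
  let delta := F2 w in
  let q := f p in
  let c1 := omul (oopp (omul gamma (omul (oconj q) I))) I in
  let c2 := omul delta (oconj q) in
  (* g1 = (f . conj gamma) . c1 : induced by ((F1 conj gamma) c1, (F2 conj gamma) c1) *)
  induced_by D (fun v => omul (omul (F1 v) (oconj gamma)) c1)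
               (fun v => omul (omul (F2 v) (oconj gamma)) c1) g1 ->
  (* g2 = (f . conj delta) . c2 *)
  induced_by D (fun v => omul (omul (F1 v) (oconj delta)) c2)
               (fun v => omul (omul (F2 v) (oconj delta)) c2) g2 ->
  g1 p = oreal (onorm gamma ^+ 2 * onorm q ^+ 2) /\
  g2 p = oreal (onorm delta ^+ 2 * onorm q ^+ 2).
Proof.
move=> _ _ hf Dw unitI w p gamma delta q c1 c2 hg1 hg2.
have hq : q = gamma + omul I delta := hf alpha beta I Dw unitI.
rewrite (hg1 alpha beta I Dw unitI) (hg2 alpha beta I Dw unitI) !onorm_sqr /c1 /c2 hq.
rewrite !oaddE ooppE omulNl.
split; [exact: slice_product1E | exact: slice_product2E].
Qed.
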